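(* Assume the family $\{\mathbf M_\theta\}_{\theta\in\mathcal I}$ of expectation matrices is good with respect to $\nu$, the process is uniformly allowable with constant $\alpha>0$, and there is $M<\infty$ with $\frac{\partial^2 f_\theta^{(k)}}{\partial s_j\partial s_i}(\mathbf 1)<M$ for all $\theta\in\mathcal I$, $i,j,k\in[N]$. Assume $\lambda>0$ and let $0<\rho<1$ with $\rho e^{\lambda}>1$. For $\theta\in\mathcal I$ set $\mathbf g_\theta(\mathbf s)=\mathbf 1-\rho\,\mathbf M_\theta(\mathbf 1-\mathbf s)$. Then there exists $\delta>0$ such that for all $\theta\in\mathcal I$ and all $\mathbf s\in[0,1]^N$ with $\max_{j\in[N]}(1-s_j)\le\delta$, we have $\mathbf g_\theta(\mathbf s)\ge\mathbf f_\theta(\mathbf s)$ componentwise.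
   Context: $N\ge2$, $\mathcal I$ countable, $\Sigma=\mathcal I^{\mathbb N}$, $\nu$ a shift-invariant ergodic probability measure on $\Sigma$; $[N]=\{0,\dots,N-1\}$; $\mathbf 1$ the all-one vector. For $\theta\in\mathcal I$, $\mathbf f_\theta=(f_\theta^{(0)},\dots,f_\theta^{(N-1)})$ with $f_\theta^{(i)}(\mathbf s)=\sum_{\mathbf z\in\mathbb N_0^N}f_\theta^{(i)}[\mathbf z]\mathbf s^{\mathbf z}$ pgfs on $\mathbb N_0^N$; $\mathbf M_\theta(i,k)=\partial f_\theta^{(i)}/\partial s_k(\mathbf 1)$ (finite), $\mathbf M_\theta(\mathbf 1-\mathbf s)$ is matrix–vector product. Allowable: each row and column has a positive entry. For nonnegative $\mathbf B$: $\|\mathbf B\|$ = sum of entries, $\|\mathbf B\|_1$ = max column sum, $(\mathbf B)_*$ = min column sum. Good: all $\mathbf M_\theta$ allowable, $\int|\log\|\mathbf M_{\theta_1}\|_1|d\nu+\int|\log(\mathbf M_{\theta_1})_*|d\nu<\infty$, and some word $(\theta_1,\dots,\theta_n)$ of positive $\nu$-cylinder measure has $\mathbf M_{\theta_1}\cdots\mathbf M_{\theta_n}$ strictly positive. $\lambda=\lim_n\frac1n\log\|\mathbf M_{\theta_1}\cdots\mathbf M_{\theta_n}\|$ ($\nu$-a.s. constant). Uniformly allowable with constant $\alpha$: $\inf\{\sum_{\mathbf w\in\mathbb N_0^N:\,w_i\ne0}f_\theta^{(k)}[\mathbf w]:\theta\in\mathcal I,\ k,i\in[N],\ \mathbf M_\theta(k,i)>0\}>\alpha$.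 *)

From HB Require Import structures.
From mathcomp Require Import all_boot all_order all_algebra.
From mathcomp Require Import all_classical all_reals all_analysis.
Set Implicit Arguments. Unset Strict Implicit. Unset Printing Implicit Defensive.
Import Order.TTheory GRing.Theory Num.Theory.
Import numFieldNormedType.Exports.
Local Open Scope classical_set_scope.
Local Open Scope ring_scope.

Definition cyl (I : Type) (w : seq I) : set (nat -> I) :=
  [set om | forall k : nat, (k < size w)%N -> om k = nth (om k) w k].

Definition cylinders (I : Type) : set (set (nat -> I)) :=
  [set C | exists w : seq I, C = cyl w].

(* Sigma = I^N, measurable sets = sigma-algebra generated by cylinders
   (= product sigma-algebra of the discrete sigma-algebras on I) *)
Definition Sigma (I : pointedType) := g_sigma_algebraType (@cylinders I).

Definition shift (I : Type) (om : nat -> I) : nat -> I := fun n => om n.+1.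

Definition shift_invariant (I : pointedType) (R : realType)
  (nu : probability (Sigma I) R) : Prop :=
  forall A : set (Sigma I), measurable A -> nu (@shift I @^-1` A) = nu A.

Definition ergodic (I : pointedType) (R : realType)
  (nu : probability (Sigma I) R) : Prop :=
  forall A : set (Sigma I), measurable A -> @shift I @^-1` A = A ->
    nu A = 0%E \/ nu A = 1%E.

(* coef : I -> 'I_N -> {ffun 'I_N -> nat} -> R ;  coef th k z = f_th^{(k)}[z] *)

Definition is_pgf_coef (N : nat) (R : realType)
  (c : {ffun 'I_N -> nat} -> R) : Prop :=
  (forall z, 0 <= c z) /\ (\esum_(z in [set: {ffun 'I_N -> nat}]) (c z)%:E = 1%E).

Definition pgf_eval (N : nat) (R : realType)
  (c : {ffun 'I_N -> nat} -> R) (s : 'I_N -> R) : R :=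
  fine (\esum_(z in [set: {ffun 'I_N -> nat}]) (c z * \prod_(i < N) s i ^+ z i)%:E).

(* d f / d s_i (1) = sum_z f[z] z_i  (extended real, possibly +oo) *)
Definition pgf_d1 (N : nat) (R : realType)
  (c : {ffun 'I_N -> nat} -> R) (i : 'I_N) : \bar R :=
  \esum_(z in [set: {ffun 'I_N -> nat}]) (c z * (z i)%:R)%:E.

(* d^2 f / d s_j d s_i (1) = sum_z f[z] z_i (z_j - [i = j]) *)
Definition pgf_d2 (N : nat) (R : realType)
  (c : {ffun 'I_N -> nat} -> R) (i j : 'I_N) : \bar R :=
  \esum_(z in [set: {ffun 'I_N -> nat}])
     (c z * (z i)%:R * ((z j)%:R - (i == j)%:R))%:E.

Definition expmx (N : nat) (R : realType)
  (c : 'I_N -> {ffun 'I_N -> nat} -> R) : 'M[R]_N :=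
  \matrix_(k, i) fine (pgf_d1 (c k) i).

Definition allowable (N : nat) (R : realType) (B : 'M[R]_N) : Prop :=
  (forall k, exists i, 0 < B k i) /\ (forall i, exists k, 0 < B k i).

Definition mx_sum (N : nat) (R : realType) (B : 'M[R]_N) : R :=
  \sum_(k < N) \sum_(i < N) B k i.

Definition mx_norm1 (N : nat) (R : realType) (B : 'M[R]_N) : R :=
  \big[Num.max/0]_(j < N) \sum_(i < N) B i j.

Definition mx_mincol (N : nat) (R : realType) (B : 'M[R]_N) : R :=
  fine (\big[Order.min/+oo%E]_(j < N) (\sum_(i < N) B i j)%:E).

Definition mx_pos (N : nat) (R : realType) (B : 'M[R]_N) : Prop :=
  forall k i, 0 < B k i.

Definition mx_word (N : nat) (R : realType) (I : Type)
  (M : I -> 'M[R]_N) (w : seq I) : 'M[R]_N :=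
  foldr (fun th B => M th *m B) 1%:M w.

Definition good (N : nat) (R : realType) (I : pointedType)
  (nu : probability (Sigma I) R) (M : I -> 'M[R]_N) : Prop :=
  [/\ forall th, allowable (M th),
      nu.-integrable [set: Sigma I]
        (fun om : Sigma I => (`| ln (mx_norm1 (M (om 0%N))) |)%:E),
      nu.-integrable [set: Sigma I]
        (fun om : Sigma I => (`| ln (mx_mincol (M (om 0%N))) |)%:E) &
      exists w : seq I, (0 < nu (cyl w))%E /\ mx_pos (mx_word M w)].

Definition lyapunov (N : nat) (R : realType) (I : pointedType)
  (nu : probability (Sigma I) R) (M : I -> 'M[R]_N) (lam : R) : Prop :=
  {ae nu, forall om : Sigma I,
     (fun n : nat => (n.+1%:R)^-1 *
        ln (mx_sum (mx_word M [seq om k | k <- iota 0 n.+1])))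
     @ \oo --> lam}.

Definition unif_allowable (N : nat) (R : realType) (I : Type)
  (c : I -> 'I_N -> {ffun 'I_N -> nat} -> R) (alpha : R) : Prop :=
  exists2 beta : R, alpha < beta &
    forall th k i, 0 < expmx (c th) k i ->
      (beta%:E <= \esum_(w in [set w : {ffun 'I_N -> nat} | w i != 0%N]) (c th k w)%:E)%E.

From HB Require Import structures.
From mathcomp Require Import all_boot all_order all_algebra.
From mathcomp Require Import all_classical all_reals all_analysis.
From mathcomp Require Import ring lra.
Set Implicit Arguments. Unset Strict Implicit. Unset Printing Implicit Defensive.
Import Order.TTheory GRing.Theory Num.Theory.
Import numFieldNormedType.Exports.
Local Open Scope classical_set_scope.
Local Open Scope ring_scope.

(* For a monomial [s^z] with every [1 - s_i <= d], induction on the degree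
   gives [1 - S <= s^z <= 1 - S + d (|z| - 1) S] with [S = sum_i z_i (1 - s_i)].
   Averaging over the offspring law yields the second-order bound
   [f(s) <= 1 - M (1 - s) + d sum_i (1 - s_i) sum_j f_ij(1)].  The second
   derivatives are uniformly bounded, an entry [M(k,i) > 0] is at least [alpha]
   by uniform allowability, and [M(k,i) = 0] forces [f_ij(1) = 0]; so for [d]
   of order [(1 - rho) alpha] the second-order term is at most
   [(1 - rho) M (1 - s)]. *)

Section esum_linear.
Variables (R : realType) (T : choiceType).

Lemma esum_ge_term (D : set T) (a : T -> \bar R) x :
  (forall y, D y -> (0 <= a y)%E) -> D x -> (a x <= \esum_(y in D) a y)%E.
Proof.
move=> a0 Dx; apply: esum_ge; exists [set x]; last by rewrite fsbig_set1.
by split; [exact: finite_set1 | move=> y ->].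
Qed.

Lemma esumZl (r : R) (a : T -> \bar R) : 0 <= r -> (forall x, (0 <= a x)%E) ->
  \esum_(x in [set: T]) (r%:E * a x)%E = (r%:E * \esum_(x in [set: T]) a x)%E.
Proof.
move=> r0 a0; rewrite /esum -ereal_supZl//; last first.
  by apply/set0P; exists (\sum_(x \in set0) a x)%E; exists set0 => //; exact: fsets_set0.
congr ereal_sup; apply/seteqP; split => x /=.
  move=> [A [finA AT] <-]; exists (\sum_(x \in A) a x)%E; first by exists A.
  by rewrite !fsbig_finite// ge0_sume_distrr.
move=> [y [A [finA AT] <-] <-]; exists A => //.
by rewrite !fsbig_finite// ge0_sume_distrr.
Qed.

Lemma esum_lincomb (J : finType) (a : T -> R) (r : J -> R) (b : J -> T -> R) :
  (forall x, 0 <= a x) -> (forall j, 0 <= r j) -> (forall j x, 0 <= b j x) ->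
  \esum_(x in [set: T]) (a x + \sum_j r j * b j x)%:E =
  (\esum_(x in [set: T]) (a x)%:E + \sum_j (r j)%:E * \esum_(x in [set: T]) (b j x)%:E)%E.
Proof.
move=> a0 r0 b0.
have rb0 x j : (0 <= (r j)%:E * (b j x)%:E)%E by rewrite -EFinM lee_fin mulr_ge0.
rewrite (eq_esum (b := fun x => (a x)%:E + \sum_j (r j)%:E * (b j x)%:E)%E); last first.
  by move=> x _; rewrite EFinD -sumEFin; congr (_ + _)%E; apply: eq_bigr => j _.
rewrite esumD; last 2 first.
- by move=> x _; rewrite lee_fin.
- by move=> x _; exact: sume_ge0.
rewrite esum_sum => [|x j _ _ //]; congr (_ + _)%E; apply: eq_bigr => j _.
by rewrite esumZl // => x; rewrite lee_fin.
Qed.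

End esum_linear.

Section second_order_expansion.
Variables (R : realType) (d : R).

(* [p] stands for a product of [n] factors [x] with [0 <= x <= 1] and
   [1 - x <= d], and [S] for the sum of the [1 - x]: then [1 - S] is the
   first-order expansion of [p] and [d * (n - 1) * S] bounds the remainder. *)
Definition expansion_bounds (p S n : R) :=
  [/\ 0 <= S, 0 <= n, 1 - S <= p & p <= 1 - S + d * (n - 1) * S].

Lemma expansion_bounds_mul x p S n : 0 <= x <= 1 -> 1 - x <= d ->
  expansion_bounds p S n -> expansion_bounds (x * p) (1 - x + S) (n + 1).
Proof.
move=> /andP[x0 x1] xd [S0 n0 lo hi].
have d0 : 0 <= d by lra.
split; [lra | lra | nra |].
have h1 : (1 - x) * (1 - S) <= (1 - x) * p by apply: ler_wpM2l => //; lra.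
have h2 : (1 - x) * S <= d * S by apply: ler_wpM2r.
have h3 : 0 <= d * n * (1 - x) by rewrite !mulr_ge0 //; lra.
nra.
Qed.

Lemma expansion_bounds_expn x k p S n : 0 <= x <= 1 -> 1 - x <= d ->
  expansion_bounds p S n ->
  expansion_bounds (x ^+ k * p) (k%:R * (1 - x) + S) (n + k%:R).
Proof.
move=> x01 xd pSn; elim: k => [|k IHk]; first by rewrite expr0 mul1r mul0r add0r addr0.
rewrite exprS -mulrA -natr1.
by have := expansion_bounds_mul x01 xd IHk; congr expansion_bounds; lra.
Qed.

Lemma expansion_bounds_prod (I : Type) (r : seq I) (s : I -> R) (z : I -> nat) :
  (forall i, 0 <= s i <= 1) -> (forall i, 1 - s i <= d) ->
  expansion_bounds (\prod_(i <- r) s i ^+ z i)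
    (\sum_(i <- r) (z i)%:R * (1 - s i)) (\sum_(i <- r) (z i)%:R).
Proof.
move=> s01 sd; elim: r => [|i r IHr]; first by rewrite !big_nil; split; lra.
rewrite !big_cons.
by have := expansion_bounds_expn (z i) (s01 i) (sd i) IHr; congr expansion_bounds; lra.
Qed.

End second_order_expansion.

Lemma second_moment_term_ge0 (R : numDomainType) (I : eqType) (z : I -> nat) i j :
  0 <= ((z i)%:R : R) * ((z j)%:R - (i == j)%:R).
Proof.
have [<-|_] := eqVneq i j; last by rewrite subr0 mulr_ge0.
by case: (z i) => [|n]; rewrite ?mul0r // -natr1 addrK mulr_ge0.
Qed.

Lemma sum_second_moment (R : comPzRingType) (I : finType) (x w : I -> R) :
  \sum_i \sum_j x i * (w i * (w j - (i == j)%:R)) =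
  (\sum_j w j - 1) * \sum_i w i * x i.
Proof.
rewrite mulr_sumr; apply: eq_bigr => i _.
have delta_sum : \sum_j ((i == j)%:R : R) = 1.
  by rewrite (bigD1 i) //= eqxx big1 ?addr0 // => j; rewrite eq_sym => /negbTE ->.
by rewrite -!mulr_sumr sumrB delta_sum; ring.
Qed.

Lemma monomial_taylor_le (R : realType) (I : finType) (d : R) (s : I -> R)
    (z : I -> nat) :
  (forall i, 0 <= s i <= 1) -> (forall i, 1 - s i <= d) ->
  \prod_i s i ^+ z i + \sum_i (z i)%:R * (1 - s i) <=
  1 + \sum_(p : I * I) d * (1 - s p.1) * ((z p.1)%:R * ((z p.2)%:R - (p.1 == p.2)%:R)).
Proof.
move=> s01 sd; have [_ _ _] := expansion_bounds_prod (index_enum I) z s01 sd.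
set S := \sum_i _ * (1 - s i); set n := \sum_i (z i)%:R => upper.
have -> : \sum_(p : I * I) d * (1 - s p.1) * ((z p.1)%:R * ((z p.2)%:R - (p.1 == p.2)%:R))
    = d * ((n - 1) * S).
  transitivity (\sum_i \sum_j d * (1 - s i) * ((z i)%:R * ((z j)%:R - (i == j)%:R))).
    exact: esym (pair_bigA _ _).
  rewrite -sum_second_moment mulr_sumr; apply: eq_bigr => i _.
  by rewrite mulr_sumr; apply: eq_bigr => j _; rewrite [RHS]mulrA.
lra.
Qed.

Section pgf_second_order_bound.
Variables (R : realType) (N : nat) (c : {ffun 'I_N -> nat} -> R).
Hypothesis c_pgf : is_pgf_coef c.
Hypothesis d1_fin : forall i, (pgf_d1 c i < +oo)%E.
Hypothesis d2_fin : forall i j, (pgf_d2 c i j < +oo)%E.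

Let m i := fine (pgf_d1 c i).
Let D i j := fine (pgf_d2 c i j).

Let c_ge0 z : 0 <= c z. Proof. by case: c_pgf. Qed.

Lemma pgf_d1_ge0 i : (0 <= pgf_d1 c i)%E.
Proof. by apply: esum_ge0 => z _; rewrite lee_fin mulr_ge0. Qed.

Lemma pgf_d1E i : pgf_d1 c i = (m i)%:E.
Proof. by rewrite fineK // ge0_fin_numE ?d1_fin ?pgf_d1_ge0. Qed.

Lemma pgf_d2E i j : pgf_d2 c i j = (D i j)%:E.
Proof.
rewrite fineK // ge0_fin_numE ?d2_fin //.
by apply: esum_ge0 => z _; rewrite lee_fin -mulrA mulr_ge0 ?second_moment_term_ge0.
Qed.

Lemma pgf_evalE (s : 'I_N -> R) : (forall j, 0 <= s j <= 1) ->
  (pgf_eval c s)%:E =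
  \esum_(z in [set: {ffun 'I_N -> nat}]) (c z * \prod_(i < N) s i ^+ z i)%:E.
Proof.
move=> s01; have mono01 z : 0 <= \prod_(i < N) s i ^+ z i <= 1.
  by rewrite prodr_ge0 ?prodr_ile1 // => i _; have /andP[? ?] := s01 i;
    rewrite exprn_ge0 ?exprn_ile1.
rewrite fineK // ge0_fin_numE; last first.
  by apply: esum_ge0 => z _; rewrite lee_fin mulr_ge0 //; case/andP: (mono01 z).
apply: (@le_lt_trans _ _ 1%E); last exact: ltry.
case: c_pgf => _ <-; apply: le_esum => z _.
by rewrite lee_fin ler_piMr //; case/andP: (mono01 z).
Qed.

Lemma pgf_taylor_le (d : R) (s : 'I_N -> R) :
  (forall j, 0 <= s j <= 1) -> (forall j, 1 - s j <= d) ->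
  pgf_eval c s + \sum_i m i * (1 - s i) <=
  1 + d * \sum_i (\sum_j D i j) * (1 - s i).
Proof.
move=> s01 sd.
have one_sub_s_ge0 i : 0 <= 1 - s i by have /andP[_] := s01 i; rewrite subr_ge0.
have ds0 i : 0 <= d * (1 - s i).
  by rewrite mulr_ge0 // (le_trans (one_sub_s_ge0 i) (sd i)).
pose lhs z := c z * \prod_i s i ^+ z i + \sum_i (1 - s i) * (c z * (z i)%:R).
pose rhs z := c z + \sum_(p : 'I_N * 'I_N) d * (1 - s p.1) *
  (c z * (z p.1)%:R * ((z p.2)%:R - (p.1 == p.2)%:R)).
have termwise z : lhs z <= rhs z.
  have e1 : \sum_i (1 - s i) * (c z * (z i)%:R) = c z * \sum_i (z i)%:R * (1 - s i).
    by rewrite mulr_sumr; apply: eq_bigr => i _; ring.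
  have e2 : \sum_(p : 'I_N * 'I_N) d * (1 - s p.1) *
        (c z * (z p.1)%:R * ((z p.2)%:R - (p.1 == p.2)%:R)) =
      c z * \sum_(p : 'I_N * 'I_N) d * (1 - s p.1) *
        ((z p.1)%:R * ((z p.2)%:R - (p.1 == p.2)%:R)).
    by rewrite mulr_sumr; apply: eq_bigr => p _; ring.
  rewrite /lhs /rhs e1 e2; have := ler_wpM2l (c_ge0 z) (monomial_taylor_le z s01 sd).
  by rewrite !mulrDr mulr1.
have := @le_esum _ _ [set: {ffun 'I_N -> nat}] (fun z => (lhs z)%:E)
  (fun z => (rhs z)%:E) (fun z _ => termwise z).
have d1E i : \esum_(z in [set: _]) (c z * (z i)%:R)%:E = (m i)%:E := pgf_d1E i.
have d2E i j : \esum_(z in [set: _]) (c z * (z i)%:R * ((z j)%:R - (i == j)%:R))%:E =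
  (D i j)%:E := pgf_d2E i j.
have mono_ge0 z : 0 <= c z * \prod_i s i ^+ z i.
  by rewrite mulr_ge0 // prodr_ge0 // => i _; have /andP[? _] := s01 i; exact: exprn_ge0.
have d1_term_ge0 i z : 0 <= c z * (z i)%:R by rewrite mulr_ge0.
have d2_term_ge0 (p : 'I_N * 'I_N) z :
    0 <= c z * (z p.1)%:R * ((z p.2)%:R - (p.1 == p.2)%:R).
  by rewrite -mulrA mulr_ge0 ?second_moment_term_ge0.
rewrite /lhs /rhs (esum_lincomb mono_ge0 one_sub_s_ge0 d1_term_ge0).
rewrite (esum_lincomb c_ge0 (fun p : 'I_N * 'I_N => ds0 p.1) d2_term_ge0).
under eq_bigr do rewrite d1E -EFinM.
under [X in (_ <= _ + X)%E]eq_bigr do rewrite d2E -EFinM.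
case: c_pgf => _ ->; rewrite -pgf_evalE // !sumEFin -!EFinD lee_fin.
have -> : \sum_i (1 - s i) * m i = \sum_i m i * (1 - s i).
  by apply: eq_bigr => i _; rewrite mulrC.
suff -> : \sum_(p : 'I_N * 'I_N) d * (1 - s p.1) * D p.1 p.2 =
    d * \sum_i (\sum_j D i j) * (1 - s i) by [].
transitivity (\sum_i \sum_j d * (1 - s i) * D i j); first exact: esym (pair_bigA _ _).
rewrite mulr_sumr; apply: eq_bigr => i _.
by rewrite mulr_suml mulr_sumr; apply: eq_bigr => j _; ring.
Qed.

Lemma pgf_d2_eq0 i j : m i = 0 -> D i j = 0.
Proof.
move=> m0; have d1_term0 z : c z * (z i)%:R = 0.
  apply/eqP; rewrite eq_le mulr_ge0 // andbT -lee_fin -m0 -pgf_d1E.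
  by rewrite /pgf_d1; apply: esum_ge_term => // y _; rewrite lee_fin mulr_ge0.
by rewrite /D /pgf_d2 esum1 // => z _; rewrite d1_term0 mul0r.
Qed.

Lemma esum_support_le_pgf_d1 (i : 'I_N) :
  (\esum_(w in [set w : {ffun 'I_N -> nat} | w i != 0%N]) (c w)%:E <= pgf_d1 c i)%E.
Proof.
rewrite esum_mkcond; apply: le_esum => z _.
case: ifP => [|_]; last by rewrite lee_fin mulr_ge0.
by rewrite in_setE /= => z_i_neq0; rewrite lee_fin ler_peMr // ler1n lt0n.
Qed.

Lemma pgf_le_linearization (alpha B rho d : R) (s : 'I_N -> R) :
  (forall i j, D i j <= B) -> (forall i, 0 < m i -> alpha <= m i) ->
  d * (N%:R * B) <= (1 - rho) * alpha -> rho <= 1 ->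
  (forall j, 0 <= s j <= 1) -> (forall j, 1 - s j <= d) ->
  pgf_eval c s <= 1 - rho * \sum_i m i * (1 - s i).
Proof.
move=> D_le_B alpha_le_m d_small rho_le1 s01 sd.
have second_order_le i : d * \sum_j D i j <= (1 - rho) * m i.
  have [m0|m_neq0] := eqVneq (m i) 0.
    by rewrite m0 big1 ?mulr0 // => j _; exact: pgf_d2_eq0.
  have m_gt0 : 0 < m i by rewrite lt0r m_neq0 fine_ge0 ?pgf_d1_ge0.
  have d_ge0 : 0 <= d by have := sd i; have /andP[_] := s01 i; lra.
  have sum_le : \sum_j D i j <= N%:R * B.
    by apply: le_trans (ler_sum _ (fun j _ => D_le_B i j)) _;
      rewrite sumr_const card_ord mulr_natl.
  apply: le_trans (ler_wpM2l d_ge0 sum_le) (le_trans d_small _).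
  by apply: ler_wpM2l; [lra | exact: alpha_le_m].
have second_order_sum_le :
    d * \sum_i (\sum_j D i j) * (1 - s i) <= (1 - rho) * \sum_i m i * (1 - s i).
  rewrite !mulr_sumr; apply: ler_sum => i _; rewrite !mulrA.
  by apply: ler_wpM2r; [have /andP[_] := s01 i; rewrite subr_ge0 | exact: second_order_le].
have := pgf_taylor_le s01 sd; lra.
Qed.

End pgf_second_order_bound.

Theorem lemma5p2 (R : realType) (N : nat) (I : pointedType)
  (c : I -> 'I_N -> {ffun 'I_N -> nat} -> R)
  (nu : probability (Sigma I) R) (alpha Mb lam rho : R) :
  (2 <= N)%N ->
  countable [set: I] ->
  shift_invariant nu -> ergodic nu ->
  (forall th k, is_pgf_coef (c th k)) ->
  (forall th k i, (pgf_d1 (c th k) i < +oo)%E) ->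
  good nu (fun th => expmx (c th)) ->
  0 < alpha -> unif_allowable c alpha ->
  (forall th k i j, (pgf_d2 (c th k) i j < Mb%:E)%E) ->
  lyapunov nu (fun th => expmx (c th)) lam ->
  0 < lam ->
  0 < rho -> rho < 1 -> 1 < rho * expR lam ->
  exists2 delta : R, 0 < delta &
    forall (th : I) (s : 'I_N -> R),
      (forall j, 0 <= s j <= 1) ->
      (forall j, 1 - s j <= delta) ->
      forall k : 'I_N,
        pgf_eval (c th k) s
          <= 1 - rho * \sum_(i < N) expmx (c th) k i * (1 - s i).
Proof.
move=> N_ge2 _ _ _ c_pgf d1_fin _ alpha_gt0 [beta alpha_lt_beta c_unif] d2_lt_Mb _ _ _
  rho_lt1 _.
pose B := `|Mb| + 1.
have B_gt0 : 0 < B by rewrite ltr_pwDr.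
have N_gt0 : 0 < N%:R :> R by rewrite ltr0n (leq_trans _ N_ge2).
exists ((1 - rho) * alpha / (N%:R * B)); first by rewrite divr_gt0 ?mulr_gt0 // subr_gt0.
move=> th s s01 s_near1 k.
have d2_fin i j : (pgf_d2 (c th k) i j < +oo)%E.
  by rewrite (lt_trans (d2_lt_Mb _ _ _ _)) ?ltry.
under eq_bigr do rewrite mxE.
apply: (pgf_le_linearization (c_pgf th k) (d1_fin th k) d2_fin (B := B) (alpha := alpha)) => //.
- move=> i j; rewrite -lee_fin -pgf_d2E //; apply/ltW/(lt_le_trans (d2_lt_Mb th k i j)).
  by rewrite lee_fin (le_trans (ler_norm _)) // lerDl.
- move=> i m_gt0; rewrite -lee_fin -pgf_d1E //.
  apply: le_trans (esum_support_le_pgf_d1 (c_pgf th k) i).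
  by apply: le_trans (c_unif th k i _); rewrite ?mxE // lee_fin ltW.
- by rewrite mulfVK // mulf_neq0 // gt_eqF.
- exact: ltW.
Qed.
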